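(* Let $K\ge 2$, let $\mathcal{C}_1,\dots,\mathcal{C}_K$ be a partition of $\mathcal{V}=\{v_1,\dots,v_N\}$ into sets of size $N/K$, and let $\mathcal{R}$ satisfy Assumption 1. Then the all-ones vector $\mathbf{1}\in\mathbb{R}^N$ is an eigenvector of $\mathbf{R}$ with eigenvalue $d$. For $k\in[K-1]$ define $\mathbf{u}_k\in\mathbb{R}^N$ by $u_{ki}=1$ if $v_i\in\mathcal{C}_k$ and $u_{ki}=-\frac1{K-1}$ otherwise. Then $\mathbf{1},\mathbf{u}_1,\dots,\mathbf{u}_{K-1}$ lie in the null space of $\mathbf{R}\left(\mathbf{I}-\frac1N\mathbf{1}\mathbf{1}^\intercal\right)$ and are linearly independent.
   Context: $\mathcal{R}$ is an undirected graph on $\mathcal{V}$ with symmetric adjacency $\mathbf{R}\in\{0,1\}^{N\times N}$. Assumption 1: $\mathcal{R}$ is $d$-regular for some $K\le d\le N$, $R_{ii}=1$ for all $i$ (self-loops counted in the degree), and each node is adjacent in $\mathcal{R}$ to exactly $d/K$ nodes of $\mathcal{C}_k$ for every $k\in[K]$ (including the self-loop). *)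

From HB Require Import structures.
From mathcomp Require Import all_boot all_order all_algebra.
Set Implicit Arguments. Unset Strict Implicit. Unset Printing Implicit Defensive.
Import Order.TTheory GRing.Theory Num.Theory.
Local Open Scope ring_scope.

(* Nodes v_1..v_N are 'I_N; clusters C_1..C_K are indexed by 'I_K (0-based);
   the partition is given by the cluster-assignment map c : 'I_N -> 'I_K,
   C_k = [set i | c i == k]. *)
Definition cluster (N K : nat) (c : 'I_N -> 'I_K) (k : 'I_K) : {set 'I_N} :=
  [set i | c i == k].

Definition ones (F : nzRingType) (N : nat) : 'cV[F]_N := const_mx 1.

(* u_k (cluster index k as a nat, 0-based):
   u_{k,i} = 1 if v_i in C_k, and -1/(K-1) otherwise. *)
Definition uvec (F : fieldType) (N K : nat) (c : 'I_N -> 'I_K) (k : nat)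
  : 'cV[F]_N :=
  \col_i (if nat_of_ord (c i) == k then 1 else - (K.-1%:R)^-1).

(* Assumption 1 on the adjacency matrix A (= bold R). *)
Definition assumption1 (F : nzRingType) (N K d : nat) (c : 'I_N -> 'I_K)
  (A : 'M[F]_N) : Prop :=
  (forall i j, A i j = 0 \/ A i j = 1) /\
  (forall i j, A i j = A j i) /\
  (K <= d <= N)%N /\
  (forall i, \sum_j A i j = d%:R) /\
  (forall i, A i i = 1) /\
  (K %| d)%N /\
  (forall i (k : 'I_K),
      #|[set j in cluster c k | A i j == 1]| = (d %/ K)%N).

From mathcomp Require Import all_boot all_order all_algebra.
From mathcomp Require Import ring.
Import Order.TTheory GRing.Theory Num.Theory.
Local Open Scope ring_scope.

(* With b = 1/(K-1), u_k = (1 + b) 1_{C_k} - b 1, so u_k is orthogonal to every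
   weight vector whose sums over the K clusters all equal the same m: the
   pairing is (1 + b) m - b K m = 0.  The all-ones weight (clusters of size
   N/K) and every row of R (d/K neighbours in each cluster) are such weights,
   so u_k has zero sum, is fixed by the centering I - 11^T/N and is killed by
   R; the centering kills 1 outright.  Independence follows by evaluating a
   vanishing combination at one node of each cluster. *)

Lemma mulmx_ones_const_rowsum (R : nzRingType) m n (A : 'M[R]_(m, n)) (r : R) :
  (forall i, \sum_j A i j = r) -> A *m ones R n = r *: ones R m.
Proof.
move=> rowsum; apply/matrixP => i j; rewrite !mxE -(rowsum i) mulr1.
by apply: eq_bigr => k _; rewrite mxE mulr1.
Qed.

Lemma ones_neq0 (R : nzRingType) n : (0 < n)%N -> ones R n != 0.
Proof.
move=> n_gt0; apply/eqP => /matrixP /(_ (Ordinal n_gt0) 0).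
by rewrite !mxE => /eqP; rewrite oner_eq0.
Qed.

Lemma sum01_card (R : nzRingType) n (w : 'I_n -> R) (S : {set 'I_n}) :
  (forall j, w j = 0 \/ w j = 1) ->
  \sum_(j in S) w j = #|[set j in S | w j == 1]|%:R.
Proof.
move=> w01; rewrite -sum1_card natr_sum big_mkcond [RHS]big_mkcond.
apply: eq_bigr => j _; rewrite inE.
by case: (w01 j) => ->; case: (j \in S); rewrite //= ?eqxx // eq_sym oner_eq0.
Qed.

Definition centering_mx (F : fieldType) N : 'M[F]_N :=
  1%:M - (N%:R)^-1 *: (ones F N *m (ones F N)^T).

Section Centering.
Variables (F : fieldType) (N : nat).

Lemma centering_mxE (v : 'cV[F]_N) :
  centering_mx F N *m v = v - ((N%:R)^-1 * \sum_i v i 0) *: ones F N.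
Proof.
have sum_v : (ones F N)^T *m v = (\sum_i v i 0)%:M.
  apply/matrixP => i j; rewrite !ord1 !mxE.
  by apply: eq_bigr => k _; rewrite !mxE mul1r.
by rewrite mulmxBl mul1mx -scalemxAl -mulmxA sum_v mul_mx_scalar scalerA.
Qed.

Lemma centering_mx_ones : N%:R != 0 :> F -> centering_mx F N *m ones F N = 0.
Proof.
move=> N_neq0; rewrite centering_mxE.
under eq_bigr do rewrite mxE.
by rewrite sumr_const card_ord mulVf ?scale1r ?subrr.
Qed.

Lemma centering_mx_id (v : 'cV[F]_N) :
  \sum_i v i 0 = 0 -> centering_mx F N *m v = v.
Proof. by move=> sum0; rewrite centering_mxE sum0 mulr0 scale0r subr0. Qed.

End Centering.

Section ClusterVectors.
Variables (F : numFieldType) (N K : nat) (c : 'I_N -> 'I_K).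
Let b : F := (K.-1%:R)^-1.

Lemma uvec_entry (k : nat) i :
  uvec F c k i 0 = (1 + b) * (c i == k :> nat)%:R - b.
Proof. rewrite mxE; case: eqP => _ /=; rewrite /b; ring. Qed.

Lemma sum_clusters (w : 'I_N -> F) :
  \sum_j w j = \sum_(l < K) \sum_(j in cluster c l) w j.
Proof.
rewrite (partition_big c xpredT) //=.
by apply: eq_bigr => l _; apply: eq_bigl => j; rewrite inE.
Qed.

Lemma uvec_orthogonal_balanced (w : 'I_N -> F) (m : F) (k : 'I_K) :
  (1 < K)%N -> (forall l : 'I_K, \sum_(j in cluster c l) w j = m) ->
  \sum_j w j * uvec F c k j 0 = 0.
Proof.
move=> K_gt1 balanced.
have total : \sum_j w j = K%:R * m.
  rewrite sum_clusters (eq_bigr _ (fun l _ => balanced l)).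
  by rewrite sumr_const card_ord mulr_natl.
under eq_bigr do rewrite uvec_entry mulrBr mulrCA.
rewrite sumrB -mulr_sumr -mulr_suml total.
have -> : \sum_j w j * (c j == k :> nat)%:R = m.
  rewrite -(balanced k) [RHS]big_mkcond; apply: eq_bigr => j _.
  by rewrite inE -(inj_eq val_inj) /=; case: (_ == _); rewrite ?mulr1 ?mulr0.
have KE : K%:R = K.-1%:R + 1 :> F by rewrite natr1 prednK // ltnW.
have K1_neq0 : K.-1%:R != 0 :> F.
  by rewrite pnatr_eq0 -lt0n -ltnS prednK // ltnW.
by rewrite KE /b; field.
Qed.

Lemma sum_uvec_eq0 (n : nat) (k : 'I_K) :
  (1 < K)%N -> (forall l : 'I_K, #|cluster c l| = n) ->
  \sum_i uvec F c k i 0 = 0.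
Proof.
move=> K_gt1 card_c; under eq_bigr do rewrite -[uvec _ _ _ _ _]mul1r.
by apply: (uvec_orthogonal_balanced _ n%:R) => // l; rewrite sumr_const card_c.
Qed.

Lemma mulmx_uvec_eq0 (A : 'M[F]_N) (m : F) (k : 'I_K) :
  (1 < K)%N -> (forall i (l : 'I_K), \sum_(j in cluster c l) A i j = m) ->
  A *m uvec F c k = 0.
Proof.
move=> K_gt1 balanced; apply/matrixP => i j; rewrite ord1 !mxE.
exact: (uvec_orthogonal_balanced _ m).
Qed.

End ClusterVectors.

Lemma free_ones_uvec (F : numFieldType) N K (c : 'I_N -> 'I_K) :
  (0 < K)%N -> (forall l, exists i, c i = l) ->
  free (ones F N :: [seq uvec F c k | k <- iota 0 K.-1]).
Proof.
case: K c => [//|K] c _ c_onto /=.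
have size_s : size (ones F N :: [seq uvec F c k | k <- iota 0 K]) == K.+1.
  by rewrite /= size_map size_iota.
apply/(freeP (X := Tuple size_s)) => x comb.
set b : F := (K%:R)^-1.
set S := \sum_(k < K) x (lift ord0 k).
have at_node r :
    x 0 - b * S + (1 + b) * \sum_(k < K | c r == k :> nat) x (lift ord0 k) = 0.
  move/matrixP: comb => /(_ r 0); rewrite summxE big_ord_recl !mxE /=.
  have nth_s (k : 'I_K) : [seq uvec F c k | k <- iota 0 K]`_k = uvec F c k.
    by rewrite (nth_map 0) ?size_iota // nth_iota.
  under eq_bigr do rewrite add0n mxE nth_s uvec_entry.
  rewrite mulr1 => comb_r; rewrite -[RHS]comb_r -addrA; congr (_ + _).
  rewrite big_mkcond /S !mulr_sumr -sumrN -big_split /=.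
  by apply: eq_bigr => k _; case: (_ == _) => /=; rewrite /b; ring.
have b1_neq0 : 1 + b != 0 by rewrite gt_eqF // ltr_pwDl // invr_ge0 ler0n.
(* No u_k is 1 on the last cluster, so a node there isolates x 0 - b S. *)
have base : x 0 - b * S = 0.
  have [r cr] := c_onto ord_max.
  move: (at_node r); rewrite cr big_pred0 ?mulr0 ?addr0 // => k.
  by rewrite /= gtn_eqF.
have coord (k : 'I_K) : x (lift ord0 k) = 0.
  have [r cr] := c_onto (widen_ord (leqnSn K) k).
  move: (at_node r); rewrite base add0r cr (big_pred1 k) => [/eqP|l].
    by rewrite mulf_eq0 (negbTE b1_neq0) => /eqP.
  by rewrite /= val_eqE eq_sym.
have x0 : x 0 = 0 by rewrite -base /S big1 ?mulr0 ?subr0.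
by move=> i; case: (unliftP ord0 i) => [k ->|->].
Qed.

Theorem lemma3 (F : realFieldType) (N K d : nat) (c : 'I_N -> 'I_K)
  (A : 'M[F]_N) :
  (2 <= K)%N ->
  (K %| N)%N ->
  (forall k : 'I_K, #|cluster c k| = (N %/ K)%N) ->
  assumption1 d c A ->
  [/\ ones F N != 0,
      A *m ones F N = d%:R *: ones F N,
      A *m (1%:M - (N%:R)^-1 *: (ones F N *m (ones F N)^T)) *m ones F N = 0,
      (forall k : nat, (k < K.-1)%N ->
         A *m (1%:M - (N%:R)^-1 *: (ones F N *m (ones F N)^T))
           *m uvec F c k = 0) &
      free (ones F N :: [seq uvec F c k | k <- iota 0 K.-1])].
Proof.
move=> K_gt1 _ card_c [A01 [_ [/andP[K_le_d d_le_N] [rowsum [_ [_ card_nbrs]]]]]].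
have K_gt0 : (0 < K)%N := ltnW K_gt1.
have K_le_N : (K <= N)%N := leq_trans K_le_d d_le_N.
have N_gt0 : (0 < N)%N := leq_trans K_gt0 K_le_N.
have balanced i (l : 'I_K) : \sum_(j in cluster c l) A i j = (d %/ K)%:R.
  by rewrite sum01_card ?card_nbrs.
have c_onto (l : 'I_K) : exists i, c i = l.
  have : (0 < #|cluster c l|)%N by rewrite card_c divn_gt0.
  by case/card_gt0P => i; rewrite inE => /eqP; exists i.
split.
- exact: ones_neq0.
- exact: mulmx_ones_const_rowsum.
- rewrite -mulmxA -/(centering_mx F N) centering_mx_ones ?mulmx0 //.
  by rewrite pnatr_eq0 -lt0n.
- move=> k k_lt; have k_ltK : (k < K)%N := leq_trans k_lt (leq_pred K).
  rewrite -[k]/(Ordinal k_ltK : nat) -mulmxA -/(centering_mx F N).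
  rewrite centering_mx_id.
    exact: mulmx_uvec_eq0 K_gt1 balanced.
  exact: sum_uvec_eq0 K_gt1 card_c.
- exact: free_ones_uvec.
Qed.
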